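(* For every integer $n\ge 1$, the restriction to $\mathfrak{so}(2n+1)$ of the functional $$F_n=\sum_{i=1}^{n}\sum_{j=1}^{n+1-i}e_{i,j}^*$$ is regular on $B_n=\mathfrak{so}(2n+1)$, i.e. the kernel of its Kirillov form on $\mathfrak{so}(2n+1)$ has dimension $n$.
   Context: Over $\mathbb{C}$. $e_{i,j}^*(X)=X_{i,j}$. Here $\mathfrak{so}(2n+1)$ denotes the Lie algebra of $(2n+1)\times(2n+1)$ matrices $X$ satisfying $X_{i,j}=-X_{2n+2-j,2n+2-i}$ for all $i,j$ (skew-symmetric with respect to the antidiagonal), spanned by $e_{i,j}-e_{2n+2-j,2n+2-i}$. For $f\in\mathfrak{g}^*$, $B_f(x,y)=f([x,y])$, $\ker(B_f)=\{x\in\mathfrak{g}: f([x,y])=0\ \forall y\in\mathfrak{g}\}$, and $f$ is regular if $\dim\ker(B_f)=\operatorname{ind}\mathfrak{g}:=\min_{g\in\mathfrak{g}^*}\dim\ker(B_g)$. It is known that $\operatorname{ind}\mathfrak{so}(2n+1)=n$. *)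

(* The ground field C is modelled as  R[i] = complex R  for
   an arbitrary  R : realType  (every realType is a complete archimedean
   ordered field, i.e. a copy of the real numbers, so R[i] is a copy of C). *)
From HB Require Import structures.
From mathcomp Require Import all_boot all_order all_algebra.
From mathcomp Require Import reals.
From mathcomp Require Import complex.
Set Implicit Arguments. Unset Strict Implicit. Unset Printing Implicit Defensive.
Import Order.TTheory GRing.Theory Num.Theory.
Local Open Scope ring_scope.

(* Indices are 0-based: i : 'I_(2n+1) stands for the paper's index i+1.
   The paper's index 2n+2-i becomes rev_ord i (= 2n - i, 0-based). *)

Definition in_so (K : pzRingType) (n : nat) (X : 'M[K]_(n.*2.+1)) : Prop :=
  forall i j : 'I_(n.*2.+1), X i j = - X (rev_ord j) (rev_ord i).

(* F_n = sum_{i=1}^n sum_{j=1}^{n+1-i} e_{i,j}^*; in 0-based indices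
   i' = i-1, j' = j-1 the range is exactly i' + j' < n. *)
Definition Fn (K : pzRingType) (n : nat) (X : 'M[K]_(n.*2.+1)) : K :=
  \sum_(i < n.*2.+1) \sum_(j < n.*2.+1 | (i + j < n)%N) X i j.

Definition lie (K : pzRingType) (m : nat) (X Y : 'M[K]_m) : 'M[K]_m :=
  X *m Y - Y *m X.

Definition in_kirillov_ker (K : pzRingType) (n : nat)
    (f : 'M[K]_(n.*2.+1) -> K) (X : 'M[K]_(n.*2.+1)) : Prop :=
  in_so X /\ forall Y, in_so Y -> f (lie X Y) = 0.

From HB Require Import structures.
From mathcomp Require Import all_boot all_order all_algebra.
From mathcomp Require Import reals complex.
From mathcomp Require Import zify ring.
Set Implicit Arguments. Unset Strict Implicit. Unset Printing Implicit Defensive.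
Import Order.TTheory GRing.Theory Num.Theory.
Local Open Scope ring_scope.

(* We work over an arbitrary field F with 2 != 0, with 0-based indices in
   'I_N, N = 2n+1.  Write M^t for the transpose along the antidiagonal, so
   that so(2n+1) = {X | X^t = -X}.

   1. F_n(Z) = tr(A Z) for the staircase matrix A = [a + b < n].  Since
      F_n([X,Y]) = tr([A,X] Y) and the trace pairing between antisymmetric
      and symmetric matrices is nondegenerate, X is in the Kirillov kernel
      iff X is in so(2n+1) and commutes with S = A - A^t.
   2. An explicit antisymmetric matrix G satisfies GS = SG = E, where E is
      the identity with the middle diagonal entry removed.  A kernel element
      has zero middle row and column, hence commutes with G as well.
   3. With Q = G^2 and e0 the first basis vector, the vectors Q^k e0 (k < n)
      are triangular with diagonal entries +-1: e0 is Q-cyclic on the first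
      n coordinates.
   4. The odd powers G^(2k+1), k < n, lie in the kernel, and their first
      columns G Q^k e0 are independent.  Conversely a kernel element is
      determined by the top half of its first column (its lower-left block
      dies by an anticommutation argument), which a combination of odd powers
      can match.  So the kernel is spanned by these n independent matrices. *)

Ltac case_ifs := repeat (case: ifP => [?|/negbT ?]).

Ltac entry_cases :=
  repeat match goal with |- context [if ?c then _ else _] =>
    lazymatch c with context [inord] => fail | _ =>
      let H := fresh "H" in case H : c; [|move/negbT: H => H] end end;
  rewrite ?inordK; try lia; case_ifs; first [lia | ring].

Section Antitranspose.
Variables (R : comPzRingType) (m : nat).
Implicit Types M P : 'M[R]_m.

Definition antitr M : 'M[R]_m := \matrix_(a, b) M (rev_ord b) (rev_ord a).

Lemma antitrK : involutive antitr.
Proof. by move=> M; apply/matrixP => a b; rewrite !mxE !rev_ordK. Qed.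

Lemma antitrM M P : antitr (M *m P) = antitr P *m antitr M.
Proof.
apply/matrixP => a b; rewrite !mxE (reindex_inj rev_ord_inj) /=.
by apply: eq_bigr => c _; rewrite !mxE mulrC.
Qed.

Lemma antitrB M P : antitr (M - P) = antitr M - antitr P.
Proof. by apply/matrixP => a b; rewrite !mxE. Qed.

Lemma antitrX M k : antitr (M ^+ k) = antitr M ^+ k.
Proof.
elim: k => [|k IHk]; last by rewrite exprS -mulmxE antitrM IHk mulmxE -exprSr.
rewrite !expr0 -idmxE; apply/matrixP => a b.
by rewrite !mxE (inj_eq rev_ord_inj) eq_sym.
Qed.

Lemma mxtrace_antitr M : \tr (antitr M) = \tr M.
Proof.
rewrite /mxtrace (reindex_inj rev_ord_inj) /=.
by apply: eq_bigr => c _; rewrite !mxE rev_ordK.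
Qed.

End Antitranspose.

Section TracePairing.
Variables (F : fieldType) (m : nat).
Hypothesis two_neq0 : (2 : F) != 0.

Lemma eq_oppr_eq0 (x : F) : x = - x -> x = 0.
Proof.
move=> h; have : 2 * x = 0 by rewrite mulr2n mulrDl mul1r {1}h addNr.
by move/eqP; rewrite mulf_eq0 (negbTE two_neq0) => /eqP.
Qed.

Lemma mxtrace_mul_delta (Z : 'M[F]_m) (i j : 'I_m) : \tr (Z *m delta_mx i j) = Z j i.
Proof.
rewrite /mxtrace (bigD1 j) //= big1 ?addr0.
  rewrite mxE (bigD1 i) //= big1 ?addr0; first by rewrite mxE !eqxx mulr1.
  by move=> c hc; rewrite mxE (negbTE hc) mulr0.
move=> a ha; rewrite mxE big1 // => c _; rewrite mxE.
by case: eqP; rewrite ?mulr0 //= => _; rewrite (negbTE ha) mulr0.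
Qed.

Lemma trace_antisym_orthE (Z : 'M[F]_m) :
  (forall Y, antitr Y = - Y -> \tr (Z *m Y) = 0) <-> antitr Z = Z.
Proof.
split => [orthZ|symZ Y antiY].
  apply/matrixP => c d; pose D : 'M[F]_m := delta_mx d c.
  have antiD : antitr (D - antitr D) = - (D - antitr D).
    by rewrite antitrB antitrK opprB.
  have := orthZ _ antiD; rewrite /D mulmxBr linearB /= mxtrace_mul_delta.
  have -> : Z *m antitr (delta_mx d c) = antitr (delta_mx d c *m antitr Z).
    by rewrite antitrM antitrK.
  rewrite mxtrace_antitr mxtrace_mulC mxtrace_mul_delta => /eqP.
  by rewrite subr_eq0 mxE => /eqP.
apply: eq_oppr_eq0.
by rewrite -{1}mxtrace_antitr antitrM symZ antiY mulNmx linearN /= mxtrace_mulC.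
Qed.

End TracePairing.

Section Staircase.
Variables (F : fieldType) (n : nat).
Local Notation N := n.*2.+1.
Implicit Types X Y Z : 'M[F]_N.

Lemma in_soE X : in_so X <-> antitr X = - X.
Proof.
split => [soX|antiX].
  by apply/matrixP => a b; rewrite !mxE soX !rev_ordK.
move=> i j; have /matrixP/(_ (rev_ord j) (rev_ord i)) := antiX.
by rewrite !mxE !rev_ordK => ->.
Qed.

Definition staircase : 'M[F]_N := \matrix_(a, b) (if (a + b < n)%N then 1 else 0).

Lemma Fn_mxtrace Z : Fn Z = \tr (staircase *m Z).
Proof.
rewrite /Fn /mxtrace; under [RHS]eq_bigr do rewrite mxE.
under [RHS]eq_bigr do under eq_bigr do rewrite mxE.
rewrite exchange_big; apply: eq_bigr => i _; rewrite big_mkcond.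
by apply: eq_bigr => j _; rewrite addnC; case: ifP => _; rewrite ?mul1r ?mul0r.
Qed.

Lemma Fn_lie X Y : Fn (lie X Y) = \tr (lie staircase X *m Y).
Proof.
rewrite Fn_mxtrace /lie mulmxBr linearB /= mulmxBl linearB /= -!mulmxA.
by congr (_ - _); rewrite mulmxA mxtrace_mulC.
Qed.

Definition Smx : 'M[F]_N := staircase - antitr staircase.

Lemma Smx_entry (a b : 'I_N) : Smx a b =
  (if (a + b < n)%N then 1 else 0) - (if (3 * n < a + b)%N then 1 else 0).
Proof.
rewrite !mxE /=; have := ltn_ord a; have := ltn_ord b.
by move=> *; entry_cases.
Qed.

Lemma lie_Smx X : antitr X = - X ->
  Smx *m X - X *m Smx = lie staircase X - antitr (lie staircase X).
Proof.
move=> antiX; rewrite /lie antitrB !antitrM antiX mulNmx mulmxN opprK.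
rewrite /Smx mulmxBl mulmxBr (addrC (- _)) !opprB addrACA [RHS]addrACA.
by congr (_ + _); rewrite addrC.
Qed.

Hypothesis two_neq0 : (2 : F) != 0.

Lemma kirillov_kerE X :
  in_kirillov_ker (@Fn F n) X <-> in_so X /\ Smx *m X = X *m Smx.
Proof.
rewrite /in_kirillov_ker; split => -[soX kerX]; have /in_soE antiX := soX.
- split => //; have symC : antitr (lie staircase X) = lie staircase X.
    by apply/(trace_antisym_orthE two_neq0) => Y /in_soE soY; rewrite -Fn_lie kerX.
  by apply/eqP; rewrite -subr_eq0 lie_Smx // symC subrr.
- split => //; have symC : antitr (lie staircase X) = lie staircase X.
    by apply/eqP; rewrite eq_sym -subr_eq0 -lie_Smx // kerX subrr.
  move=> Y /in_soE antiY; rewrite Fn_lie.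
  exact: (proj2 (trace_antisym_orthE two_neq0 _) symC Y antiY).
Qed.

(* The quasi-inverse G of S.  Row a < n of G is e_(n-1-a) - e_(n-a), row
   a > n is e_(3n-a) - e_(3n+1-a) (with out-of-range terms dropped), and the
   middle row is zero. *)
Definition gentry (a b : nat) : F :=
  if (a < n)%N && (b < n)%N then
    (if (a + b == n.-1)%N then 1 else if (a + b == n)%N then -1 else 0)
  else if (n < a)%N && (n < b)%N then
    (if (a + b == 3 * n)%N then 1 else if (a + b == (3 * n).+1)%N then -1 else 0)
  else 0.

Definition Gmx : 'M[F]_N := \matrix_(a, b) gentry a b.

Lemma gentryC a b : gentry a b = gentry b a.
Proof. by rewrite /gentry; entry_cases. Qed.

Lemma sum_pick (x : 'I_N -> F) (P : bool) (k : nat) c : (k < N)%N ->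
  \sum_(b < N) (if P && ((b : nat) == k) then c else 0) * x b
  = if P then c * x (inord k) else 0.
Proof.
move=> hk; rewrite (bigD1 (inord k)) //= big1 ?addr0.
  by rewrite inordK // eqxx andbT; case: P => //; rewrite mul0r.
move=> b hb; case: P; rewrite ?mul0r //=.
case: eqP; rewrite ?mul0r // => e; case/eqP: hb; apply: val_inj.
by rewrite /= inordK.
Qed.

Lemma gentry_sum (x : 'I_N -> F) (a : nat) : (a < N)%N ->
  \sum_(c < N) gentry a c * x c =
  if (a < n)%N then
    x (inord (n.-1 - a)) - (if (0 < a)%N then x (inord (n - a)) else 0)
  else if (n < a)%N then
    (if (a < n.*2)%N then x (inord (3 * n - a)) else 0) - x (inord ((3 * n).+1 - a))
  else 0.
Proof.
move=> ha; case: ifP => [lo|/negbT lo].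
  have rowE c : (c < N)%N -> gentry a c = (if true && (c == n.-1 - a)%N then 1 else 0)
      + (if (0 < a)%N && (c == n - a)%N then -1 else 0).
    by move=> hc; rewrite /gentry; entry_cases.
  under eq_bigr => c _ do rewrite rowE // ?ltn_ord mulrDl.
  by rewrite big_split !sum_pick /=; try lia; case_ifs; ring.
case: ifP => [hi|/negbT hi].
  have rowE c : (c < N)%N -> gentry a c = (if (a < n.*2)%N && (c == 3 * n - a)%N then 1 else 0)
      + (if true && (c == (3 * n).+1 - a)%N then -1 else 0).
    by move=> hc; rewrite /gentry; entry_cases.
  under eq_bigr => c _ do rewrite rowE // ?ltn_ord mulrDl.
  by rewrite big_split !sum_pick /=; try lia; case_ifs; ring.
by rewrite big1 // => c _; rewrite /gentry; case_ifs; first [lia | ring].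
Qed.

Lemma mulGmx_entry p (M : 'M[F]_(N, p)) (a : 'I_N) (b : 'I_p) : (Gmx *m M) a b =
  if (a < n)%N then
    M (inord (n.-1 - a)) b - (if (0 < a)%N then M (inord (n - a)) b else 0)
  else if (n < a)%N then
    (if (a < n.*2)%N then M (inord (3 * n - a)) b else 0) - M (inord ((3 * n).+1 - a)) b
  else 0.
Proof.
rewrite mxE; under eq_bigr => c _ do rewrite mxE.
exact: (gentry_sum (fun c => M c b) (ltn_ord a)).
Qed.

Lemma mulmxGmx_entry p (M : 'M[F]_(p, N)) (a : 'I_p) (b : 'I_N) : (M *m Gmx) a b =
  if (b < n)%N then
    M a (inord (n.-1 - b)) - (if (0 < b)%N then M a (inord (n - b)) else 0)
  else if (n < b)%N then
    (if (b < n.*2)%N then M a (inord (3 * n - b)) else 0) - M a (inord ((3 * n).+1 - b))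
  else 0.
Proof.
rewrite mxE; under eq_bigr => c _ do rewrite mxE gentryC mulrC.
exact: (gentry_sum (fun c => M a c) (ltn_ord b)).
Qed.

Definition Emx : 'M[F]_N :=
  \matrix_(a, b) (if (a == b :> nat) && (a != n :> nat) then 1 else 0).

Lemma mulGS : Gmx *m Smx = Emx.
Proof.
apply/matrixP => a c; rewrite mulGmx_entry !Smx_entry mxE.
by have := ltn_ord a; have := ltn_ord c; move=> *; entry_cases.
Qed.

Lemma mulSG : Smx *m Gmx = Emx.
Proof.
apply/matrixP => a c; rewrite mulmxGmx_entry !Smx_entry mxE.
by have := ltn_ord a; have := ltn_ord c; move=> *; entry_cases.
Qed.

Lemma antitrG : antitr Gmx = - Gmx.
Proof.
apply/matrixP => a b; rewrite !mxE /gentry /=.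
by have := ltn_ord a; have := ltn_ord b; move=> *; entry_cases.
Qed.

Lemma trGmx : Gmx^T = Gmx.
Proof. by apply/matrixP => a b; rewrite !mxE gentryC. Qed.

Lemma mulEmx_entry p (M : 'M[F]_(N, p)) a b :
  (Emx *m M) a b = if (a != n :> nat) then M a b else 0.
Proof.
rewrite mxE (bigD1 a) //= big1 ?addr0.
  by rewrite mxE eqxx /=; case: ifP; rewrite ?mul1r ?mul0r.
move=> c hc; rewrite mxE (_ : (a == c :> nat) = false) ?mul0r //.
by apply/negbTE; rewrite eq_sym.
Qed.

Lemma mulmxEmx_entry (M : 'M[F]_N) a b :
  (M *m Emx) a b = if (b != n :> nat) then M a b else 0.
Proof.
rewrite mxE (bigD1 b) //= big1 ?addr0.
  by rewrite mxE eqxx /=; case: ifP; rewrite ?mulr1 ?mulr0.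
by move=> c hc; rewrite mxE (_ : (c == b :> nat) = false) ?mulr0 //; apply/negbTE.
Qed.

Definition Qmx : 'M[F]_N := Gmx *m Gmx.
Definition e0 : 'cV[F]_N := delta_mx ord0 0.
Definition vcoord (v : 'cV[F]_N) (k : nat) : F := v (inord k) 0.

Definition supp_upto (v : 'cV[F]_N) (k : nat) : Prop :=
  forall a : 'I_N, (k < a)%N -> v a 0 = 0.

Lemma mul_e0 (M : 'M[F]_N) a : (M *m e0) a 0 = M a 0.
Proof. by rewrite -colE mxE. Qed.

Lemma supp_coord v k l : supp_upto v k -> (k < l)%N -> (l < N)%N -> v (inord l) 0 = 0.
Proof. by move=> hv h1 h2; rewrite hv // inordK. Qed.

Lemma commG_commQ (M : 'M[F]_N) : M *m Gmx = Gmx *m M -> M *m Qmx = Qmx *m M.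
Proof. by move=> hM; rewrite /Qmx mulmxA hM -!mulmxA hM. Qed.

Lemma commQX (M : 'M[F]_N) k : M *m Qmx = Qmx *m M -> M *m Qmx ^+ k = Qmx ^+ k *m M.
Proof. by move=> hM; rewrite !mulmxE; apply: commrX; rewrite /GRing.comm -!mulmxE hM. Qed.

Lemma commGQ : Gmx *m Qmx = Qmx *m Gmx.
Proof. by rewrite /Qmx mulmxA. Qed.

Lemma mulQ_low (v : 'cV[F]_N) (a : 'I_N) : (a < n)%N ->
  (Qmx *m v) a 0 = vcoord v a - (if (a.+1 < n)%N then vcoord v a.+1 else 0)
                   - (if (0 < a)%N then vcoord v a.-1 - vcoord v a else 0).
Proof.
move=> ha; rewrite /Qmx -mulmxA mulGmx_entry ha !mulGmx_entry !inordK; try lia.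
have -> : (n.-1 - (n.-1 - a) = a)%N by lia.
have -> : (n - (n - a) = a)%N by lia.
have -> : (n - (n.-1 - a) = a.+1)%N by lia.
have -> : (n.-1 - (n - a) = a.-1)%N by lia.
by rewrite /vcoord; case_ifs; first [done | lia].
Qed.

Lemma supp_mulG (v : 'cV[F]_N) : supp_upto v n.-1 -> supp_upto (Gmx *m v) n.-1.
Proof.
move=> hv a ha; rewrite mulGmx_entry.
case: ifP => h1; first lia.
case: ifP => h2 //.
have := ltn_ord a; case: ifP => h3 ?; rewrite !(supp_coord hv) //; try lia.
all: by rewrite subrr.
Qed.

Lemma supp_mulQ (v : 'cV[F]_N) : supp_upto v n.-1 -> supp_upto (Qmx *m v) n.-1.
Proof. by move=> hv; rewrite /Qmx -mulmxA; apply/supp_mulG/supp_mulG. Qed.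

Lemma Qpow_e0_triangular k : (k < n)%N ->
  supp_upto (Qmx ^+ k *m e0) k /\ vcoord (Qmx ^+ k *m e0) k = (-1) ^+ k.
Proof.
elim: k => [_|k IH hk].
  rewrite expr0 mul1mx; split.
    by move=> a ha; rewrite mxE; case: eqP => // e; rewrite e in ha.
  have e : inord 0 = ord0 :> 'I_N by apply: val_inj; rewrite /= inordK.
  by rewrite /vcoord mxE e !eqxx expr0.
have [hs hv] := IH (ltnW hk).
set v := Qmx ^+ k *m e0 in hs hv *.
have -> : Qmx ^+ k.+1 *m e0 = Qmx *m v by rewrite exprS -mulmxE mulmxA.
have hsL : supp_upto v n.-1 by move=> a ha; apply: hs; lia.
split.
  move=> a ha; case: (ltnP a n) => h; last by apply: (supp_mulQ hsL); lia.
  rewrite mulQ_low // /vcoord !(supp_coord hs); try lia.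
  by case_ifs; rewrite ?subrr ?subr0.
rewrite /vcoord mulQ_low inordK; try lia.
rewrite /vcoord (supp_coord hs) //; try lia.
rewrite /= -/(vcoord v k) hv; case: ifP => _; rewrite ?(supp_coord hs); try lia.
all: by rewrite exprS mulN1r; ring.
Qed.

Lemma Qpow_e0_span m : (m <= n)%N -> forall u : 'cV[F]_N,
  (forall a : 'I_N, (m <= a)%N -> u a 0 = 0) ->
  exists c : nat -> F, u = \sum_(k < m) c k *: (Qmx ^+ k *m e0).
Proof.
elim: m => [_ u hu|m IH hm u hu].
  exists (fun _ => 0); rewrite big_ord0.
  by apply/matrixP => a b; rewrite ord1 mxE hu.
have [hs hv] := Qpow_e0_triangular hm.
set w := Qmx ^+ m *m e0 in hs hv *.
set s := u (inord m) 0 * (-1) ^+ m.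
have hu' : forall a : 'I_N, (m <= a)%N -> (u - s *: w) a 0 = 0.
  move=> a ha; have -> : (u - s *: w) a 0 = u a 0 - s * w a 0 by rewrite !mxE.
  case: (ltnP m a) => h.
    by rewrite hu ?hs // ?mulr0 ?subr0 //; lia.
  have e : a = inord m by apply: val_inj; rewrite /= inordK; lia.
  move: hv; rewrite /vcoord -e => ->.
  by rewrite /s -mulrA -expr2 -exprM mulnC exprM sqrrN !expr1n mulr1 e subrr.
have [c hc] := IH (ltnW hm) _ hu'.
exists (fun k => if k == m then s else c k).
rewrite big_ord_recr /= eqxx.
have -> : \sum_(i < m) (if (i : nat) == m then s else c i) *: (Qmx ^+ i *m e0)
        = \sum_(i < m) c i *: (Qmx ^+ i *m e0).
  by apply: eq_bigr => i _; rewrite ltn_eqF.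
by rewrite -hc subrK.
Qed.

Lemma Qpow_e0_free m : (m <= n)%N -> forall c : nat -> F,
  \sum_(k < m) c k *: (Qmx ^+ k *m e0) = 0 -> forall k, (k < m)%N -> c k = 0.
Proof.
elim: m => [_ c _ k //|m IH hm c hc k hk].
have [_ hv] := Qpow_e0_triangular hm.
move: hc; rewrite big_ord_recr /= => hc.
have cm : c m = 0.
  have /matrixP/(_ (inord m) 0) := hc.
  rewrite mxE summxE big1.
    have -> : (c m *: (Qmx ^+ m *m e0)) (inord m) 0 = c m * vcoord (Qmx ^+ m *m e0) m.
      by rewrite mxE.
    rewrite mxE add0r hv => /eqP.
    by rewrite mulf_eq0 expf_eq0 oppr_eq0 oner_eq0 andbF orbF => /eqP.
  move=> i _; rewrite mxE.
  have [hs' _] := Qpow_e0_triangular (ltn_trans (ltn_ord i) hm).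
  by rewrite hs' ?mulr0 // inordK //; lia.
move: hc; rewrite cm scale0r addr0 => hc.
case: (ltnP k m) => h; first exact: (IH (ltnW hm)).
by have -> : k = m by lia.
Qed.

(* A matrix commuting with Q and killing e0 vanishes on the first n columns,
   since these columns are spanned by the Q^k e0. *)
Lemma commQ_first_cols_zero (M : 'M[F]_N) : M *m Qmx = Qmx *m M ->
  (forall a, M a 0 = 0) -> forall a b : 'I_N, (b < n)%N -> M a b = 0.
Proof.
move=> hQ h0 a b hb.
have hMe0 : M *m e0 = 0 by apply/matrixP => i j; rewrite -colE !mxE h0.
have hu : forall i : 'I_N, (n <= i)%N -> (delta_mx b 0 : 'cV[F]_N) i 0 = 0.
  by move=> i hi; rewrite mxE; case: eqP => //= e; rewrite -e in hb; lia.
have [c hc] := Qpow_e0_span (leqnn n) hu.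
have <- : (M *m (delta_mx b 0 : 'cV[F]_N)) a 0 = M a b by rewrite -colE mxE.
rewrite hc mulmx_sumr summxE big1 // => k _.
by rewrite -scalemxAr mulmxA commQX // -mulmxA hMe0 mulmx0 scaler0 mxE.
Qed.

Lemma commQ_agrees_polyQ (M : 'M[F]_N) : M *m Qmx = Qmx *m M ->
  (forall a : 'I_N, (n <= a)%N -> M a 0 = 0) ->
  exists2 P, P *m Gmx = Gmx *m P & forall a b : 'I_N, (b < n)%N -> M a b = P a b.
Proof.
move=> hMQ hM0.
have hu : forall a : 'I_N, (n <= a)%N -> (M *m e0) a 0 = 0.
  by move=> a ha; rewrite mul_e0 hM0.
have [c hc] := Qpow_e0_span (leqnn n) hu.
pose P := \sum_(k < n) c k *: Qmx ^+ k.
have hPG : P *m Gmx = Gmx *m P.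
  rewrite /P mulmx_suml mulmx_sumr; apply: eq_bigr => k _.
  by rewrite -scalemxAl -scalemxAr (commQX _ commGQ).
have hPe0 : P *m e0 = M *m e0.
  by rewrite hc /P mulmx_suml; apply: eq_bigr => k _; rewrite scalemxAl.
exists P => // a b hb; apply/eqP; rewrite -subr_eq0; apply/eqP.
have -> : M a b - P a b = (M - P) a b by rewrite !mxE.
apply: commQ_first_cols_zero hb.
  by rewrite mulmxBl mulmxBr hMQ (commG_commQ hPG).
by move=> i; rewrite -mul_e0 mulmxBl hPe0 subrr mxE.
Qed.

Hypothesis n_gt0 : (0 < n)%N.

(* Column b < n of M G is column n-1-b of M minus column n-b of M, so M G
   vanishing on the first n columns forces M to vanish there too. *)
Lemma mulG_first_cols_zero (M : 'M[F]_N) (a : 'I_N) :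
  (forall b : 'I_N, (b < n)%N -> (M *m Gmx) a b = 0) ->
  forall b : 'I_N, (b < n)%N -> M a b = 0.
Proof.
move=> hMG.
have hrev : forall j, (j < n)%N -> M a (inord (n.-1 - j)) = 0.
  elim=> [_|j IH hj].
    have := hMG (inord 0); rewrite mulmxGmx_entry !inordK //; try lia.
    by rewrite n_gt0 /= subr0 subn0 => ->.
  have := hMG (inord j.+1); rewrite mulmxGmx_entry !inordK //; try lia.
  rewrite hj.
  have -> : (n - j.+1 = n.-1 - j)%N by lia.
  rewrite IH; try lia.
  by rewrite /= subr0 => ->.
move=> b hb; have := hrev (n.-1 - b)%N (ltac:(lia)).
suff -> : inord (n.-1 - (n.-1 - b)) = b :> 'I_N by [].
by apply: val_inj; rewrite /= inordK; lia.
Qed.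

(* A matrix anticommuting with G whose first column lives on the first n
   coordinates vanishes on the first n columns: there it agrees with a
   polynomial P in Q, so (W G)_{ab} = (P G)_{ab} = (G P)_{ab} = (G W)_{ab}
   = -(W G)_{ab} for b < n. *)
Lemma anticommG_first_cols_zero (W : 'M[F]_N) : Gmx *m W = - (W *m Gmx) ->
  (forall a : 'I_N, (n <= a)%N -> W a 0 = 0) ->
  forall a b : 'I_N, (b < n)%N -> W a b = 0.
Proof.
move=> hGW hW0 a.
have hWQ : W *m Qmx = Qmx *m W.
  apply/esym; rewrite /Qmx -[LHS]mulmxA hGW mulmxN [in LHS]mulmxA hGW.
  by rewrite mulNmx opprK mulmxA.
have [P hPG hWP] := commQ_agrees_polyQ hWQ hW0.
have Gcol : forall (i b : 'I_N), (b < n)%N -> (n <= i)%N -> Gmx i b = 0.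
  move=> i b hb hi; rewrite mxE /gentry; have := ltn_ord i.
  by case_ifs; first [lia | done].
apply: mulG_first_cols_zero => b hb; apply: (eq_oppr_eq0 two_neq0).
have eWP : (W *m Gmx) a b = (P *m Gmx) a b.
  rewrite !mxE; apply: eq_bigr => i _; case: (ltnP i n) => hi; first by rewrite hWP.
  by rewrite Gcol ?mulr0.
have ePW : (Gmx *m P) a b = (Gmx *m W) a b.
  by rewrite !mxE; apply: eq_bigr => i _; rewrite hWP.
by rewrite {1}eWP hPG ePW hGW mxE.
Qed.

Definition Jmx : 'M[F]_N := \matrix_(a, b) (if b == rev_ord a then 1 else 0).
Definition PLmx : 'M[F]_N := \matrix_(a, b) (if (a == b) && (a < n)%N then 1 else 0).

Lemma mulJmx_entry (M : 'M[F]_N) a b : (Jmx *m M) a b = M (rev_ord a) b.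
Proof.
rewrite mxE (bigD1 (rev_ord a)) //= big1 ?addr0; first by rewrite mxE eqxx mul1r.
by move=> c hc; rewrite mxE (negbTE hc) mul0r.
Qed.

Lemma mulmxJmx_entry (M : 'M[F]_N) a b : (M *m Jmx) a b = M a (rev_ord b).
Proof.
rewrite mxE (bigD1 (rev_ord b)) //= big1 ?addr0.
  by rewrite mxE rev_ordK eqxx mulr1.
move=> c hc; rewrite mxE; case: eqP; rewrite ?mulr0 // => e.
by case/eqP: hc; rewrite e rev_ordK.
Qed.

Lemma mulPLmx_entry (M : 'M[F]_N) (a b : 'I_N) :
  (PLmx *m M) a b = if (a < n)%N then M a b else 0.
Proof.
rewrite mxE (bigD1 a) //= big1 ?addr0.
  by rewrite mxE eqxx /=; case: ifP; rewrite ?mul1r ?mul0r.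
by move=> c hc; rewrite mxE eq_sym (negbTE hc) mul0r.
Qed.

Lemma mulmxPLmx_entry (M : 'M[F]_N) (a b : 'I_N) :
  (M *m PLmx) a b = if (b < n)%N then M a b else 0.
Proof.
rewrite mxE (bigD1 b) //= big1 ?addr0.
  by rewrite mxE eqxx /=; case: ifP; rewrite ?mulr1 ?mulr0.
by move=> c hc; rewrite mxE (negbTE hc) mulr0.
Qed.

Lemma mulGJ : Gmx *m Jmx = - (Jmx *m Gmx).
Proof.
apply/matrixP => a b; rewrite mulmxJmx_entry [RHS]mxE mulJmx_entry !mxE /gentry /=.
by have := ltn_ord a; have := ltn_ord b; move=> *; entry_cases.
Qed.

Lemma mulGPL : Gmx *m PLmx = PLmx *m Gmx.
Proof.
apply/matrixP => a b; rewrite mulmxPLmx_entry mulPLmx_entry !mxE /gentry /=.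
by have := ltn_ord a; have := ltn_ord b; move=> *; entry_cases.
Qed.

(* A matrix commuting with G has zero lower-left block: reflected into the
   upper-left block by W = PL J X PL, it anticommutes with G. *)
Lemma commG_lower_left_zero X : Gmx *m X = X *m Gmx ->
  forall a b : 'I_N, (n < a)%N -> (b < n)%N -> X a b = 0.
Proof.
move=> hX a b ha hb.
pose W := PLmx *m Jmx *m X *m PLmx.
have hGW : Gmx *m W = - (W *m Gmx).
  have -> : Gmx *m W = PLmx *m (Gmx *m Jmx) *m X *m PLmx by rewrite /W !mulmxA mulGPL.
  rewrite mulGJ mulmxN !mulNmx; congr (- _).
  have -> : PLmx *m (Jmx *m Gmx) *m X *m PLmx = PLmx *m Jmx *m (Gmx *m X) *m PLmx.
    by rewrite !mulmxA.
  rewrite hX.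
  have -> : PLmx *m Jmx *m (X *m Gmx) *m PLmx = PLmx *m Jmx *m X *m (Gmx *m PLmx).
    by rewrite !mulmxA.
  by rewrite mulGPL /W !mulmxA.
have hW0 : forall i : 'I_N, (n <= i)%N -> W i 0 = 0.
  by move=> i hi; rewrite /W mulmxPLmx_entry n_gt0 -mulmxA mulPLmx_entry ltnNge hi.
have hra : (rev_ord a < n)%N by rewrite /=; have := ltn_ord a; lia.
have := anticommG_first_cols_zero hGW hW0 (rev_ord a) hb.
by rewrite /W mulmxPLmx_entry hb -mulmxA mulPLmx_entry hra mulJmx_entry rev_ordK.
Qed.

Definition mid : 'I_N := inord n.

Lemma rev_mid : rev_ord mid = mid.
Proof. by apply: val_inj; rewrite /= inordK; lia. Qed.

Lemma mid_eq (a : 'I_N) : (a : nat) = n -> a = mid.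
Proof. by move=> e; apply: val_inj; rewrite /= inordK; lia. Qed.

Definition so_centralizer X : Prop := in_so X /\ Smx *m X = X *m Smx.

(* Column n of S is zero, hence column n of X = E X = G S X = G X S is zero;
   by antisymmetry so is row n. *)
Lemma so_centralizer_col_mid X : so_centralizer X -> forall a, X a mid = 0.
Proof.
move=> [soX hS] a.
have hXS : forall c, (X *m Smx) c mid = 0.
  move=> c; rewrite mxE big1 // => i _; rewrite Smx_entry inordK; last lia.
  by have := ltn_ord i; move=> *; case_ifs; try lia; ring.
have : (Emx *m X) a mid = 0.
  by rewrite -mulGS -mulmxA hS mxE big1 // => i _; rewrite hXS mulr0.
rewrite mulEmx_entry; case: ifP => // /negbT; rewrite negbK => /eqP /mid_eq -> _.
by apply: (eq_oppr_eq0 two_neq0); rewrite {1}soX rev_mid.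
Qed.

Lemma so_centralizer_row_mid X : so_centralizer X -> forall b, X mid b = 0.
Proof.
move=> hX b; have [soX _] := hX.
by rewrite soX rev_mid so_centralizer_col_mid // oppr0.
Qed.

(* Kernel elements commute with G: G X = G X E = G X S G = G S X G = E X G = X G. *)
Lemma so_centralizer_commG X : so_centralizer X -> Gmx *m X = X *m Gmx.
Proof.
move=> hX; have [_ hS] := hX.
have hEX : Emx *m X = X.
  apply/matrixP => a b; rewrite mulEmx_entry; case: ifP => //.
  by move=> /negbT; rewrite negbK => /eqP /mid_eq ->; rewrite so_centralizer_row_mid.
have hXE : X *m Emx = X.
  apply/matrixP => a b; rewrite mulmxEmx_entry; case: ifP => //.
  by move=> /negbT; rewrite negbK => /eqP /mid_eq ->; rewrite so_centralizer_col_mid.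
by rewrite -{1}hXE -mulSG !mulmxA -(mulmxA Gmx X Smx) -hS mulmxA mulGS hEX.
Qed.

(* A kernel element is determined by the first n entries of its first column:
   the lower-left block and the middle row vanish, so the whole first column
   vanishes; then the first n columns vanish (cyclicity), then the lower-left
   block of X^T, and the rest follows by antisymmetry. *)
Lemma so_centralizer_first_col_inj X : so_centralizer X ->
  (forall a : 'I_N, (a < n)%N -> X a 0 = 0) -> X = 0.
Proof.
move=> hX h; have [soX _] := hX; have hG := so_centralizer_commG hX.
have h0 : forall a, X a 0 = 0.
  move=> a; case: (ltngtP a n) => ha; first exact: h.
    exact: commG_lower_left_zero.
  by rewrite (mid_eq ha) so_centralizer_row_mid.
have hL := commQ_first_cols_zero (commG_commQ (esym hG)) h0.
have hT : Gmx *m X^T = X^T *m Gmx by rewrite -{1}trGmx -trmx_mul -hG trmx_mul trGmx.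
apply/matrixP => a b; rewrite mxE.
case: (ltngtP b n) => hb; first exact: hL.
  case: (ltngtP a n) => ha.
  - by have := commG_lower_left_zero hT hb ha; rewrite mxE.
  - rewrite soX hL ?oppr0 //=; have := ltn_ord a; lia.
  - by rewrite (mid_eq ha) so_centralizer_row_mid.
by rewrite (mid_eq hb) so_centralizer_col_mid.
Qed.

Lemma so_centralizerD X Y : so_centralizer X -> so_centralizer Y -> so_centralizer (X + Y).
Proof.
move=> [soX hX] [soY hY]; split.
  by move=> i j; rewrite !mxE soX soY opprD.
by rewrite mulmxDr [RHS]mulmxDl hX hY.
Qed.

Lemma so_centralizerZ c X : so_centralizer X -> so_centralizer (c *: X).
Proof.
move=> [soX hX]; split.
  by move=> i j; rewrite !mxE soX mulrN.
by rewrite -scalemxAr hX scalemxAl.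
Qed.

Lemma so_centralizer_sum (I : finType) (P : pred I) (f : I -> 'M[F]_N) :
  (forall i, P i -> so_centralizer (f i)) -> so_centralizer (\sum_(i | P i) f i).
Proof.
move=> hf; apply: big_ind => //; last exact: so_centralizerD.
by split; [move=> i j; rewrite !mxE oppr0 | rewrite mulmx0 mul0mx].
Qed.

Lemma so_centralizer_oddG k : so_centralizer (Gmx ^+ k.*2.+1).
Proof.
split.
  apply/in_soE; rewrite antitrX antitrG.
  by rewrite exprNn -signr_odd /= odd_double /= expr1 mulN1r.
by rewrite !mulmxE; apply: commrX; rewrite /GRing.comm -!mulmxE mulSG mulGS.
Qed.

Lemma oddG_Qpow k : Gmx ^+ k.*2.+1 = Gmx *m Qmx ^+ k.
Proof. by rewrite exprS -[k.*2]mul2n exprM /Qmx mulmxE expr2. Qed.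

Lemma odd_lincomb_e0 (c : nat -> F) :
  (\sum_(k < n) c k *: Gmx ^+ k.*2.+1) *m e0
  = Gmx *m \sum_(k < n) c k *: (Qmx ^+ k *m e0).
Proof.
rewrite mulmx_suml mulmx_sumr; apply: eq_bigr => k _.
by rewrite oddG_Qpow -scalemxAl -scalemxAr mulmxA.
Qed.

Lemma mulEmx_low (v : 'cV[F]_N) :
  (forall a : 'I_N, (n <= a)%N -> v a 0 = 0) -> Emx *m v = v.
Proof.
move=> hv; apply/matrixP => a b; rewrite ord1 mulEmx_entry.
by case: ifP => // /negbT; rewrite negbK => /eqP e; rewrite hv ?e.
Qed.

Definition odd_powers : n.-tuple 'M[F]_N := [tuple Gmx ^+ (i : nat).*2.+1 | i < n].

Lemma odd_powers_nth (i : 'I_n) : odd_powers`_i = Gmx ^+ (i : nat).*2.+1.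
Proof. by rewrite /odd_powers nth_mktuple. Qed.

(* Every kernel element is a combination of odd powers of G: match the top
   of its first column (S u is supported on the first n coordinates, hence a
   combination of the Q^k e0, and G S = E), then apply injectivity. *)
Lemma so_centralizer_in_span X : so_centralizer X -> X \in <<odd_powers>>%VS.
Proof.
move=> hX.
pose u : 'cV[F]_N := \col_a (if (a < n)%N then X a 0 else 0).
have hSu : forall a : 'I_N, (n <= a)%N -> (Smx *m u) a 0 = 0.
  move=> a ha; rewrite mxE big1 // => b _; rewrite Smx_entry mxE.
  by have := ltn_ord a; have := ltn_ord b; move=> *; case_ifs; try lia; ring.
have [c hc] := Qpow_e0_span (leqnn n) hSu.
pose Y := \sum_(k < n) c k *: Gmx ^+ (k : nat).*2.+1.
have hY : Y *m e0 = u.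
  rewrite /Y odd_lincomb_e0 -hc mulmxA mulGS mulEmx_low // => a ha.
  by rewrite mxE ltnNge ha.
have YC : so_centralizer Y.
  by apply: so_centralizer_sum => k _; apply/so_centralizerZ/so_centralizer_oddG.
have XY : so_centralizer (X - Y).
  by rewrite -scaleN1r; apply/so_centralizerD/so_centralizerZ.
have -> : X = Y.
  apply/eqP; rewrite -subr_eq0; apply/eqP/so_centralizer_first_col_inj => // a ha.
  have -> : (X - Y) a 0 = X a 0 - Y a 0 by rewrite !mxE.
  by rewrite -(mul_e0 Y) hY mxE ha subrr.
rewrite /Y; apply: memv_suml => k _; apply: memvZ; rewrite -odd_powers_nth.
by apply: memv_span; apply: mem_nth; rewrite size_tuple.
Qed.

Lemma span_odd_powersE X : X \in <<odd_powers>>%VS <-> so_centralizer X.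
Proof.
split; last exact: so_centralizer_in_span.
move/coord_span => ->; apply: so_centralizer_sum => i _; apply: so_centralizerZ.
by rewrite odd_powers_nth; exact: so_centralizer_oddG.
Qed.

(* The odd powers are independent: a vanishing combination has first column
   G v = 0 with v = sum c_k Q^k e0 supported on the first n coordinates, so
   v = E v = S G v = 0 and all c_k vanish. *)
Lemma odd_powers_free : free odd_powers.
Proof.
apply/freeP => k hk i.
pose c (j : nat) := if @insub nat (fun x => (x < n)%N) 'I_n j is Some i then k i else 0.
have ck : forall i : 'I_n, c i = k i by move=> i'; rewrite /c valK.
pose v := \sum_(j < n) c j *: (Qmx ^+ j *m e0).
have Gv : Gmx *m v = 0.
  rewrite /v -odd_lincomb_e0 -[RHS](mul0mx _ e0) -[X in _ = X *m _]hk.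
  by congr (_ *m _); apply: eq_bigr => j _; rewrite ck odd_powers_nth.
have v0 : v = 0.
  have vlow : forall a : 'I_N, (n <= a)%N -> v a 0 = 0.
    move=> a ha; rewrite /v summxE big1 // => j _; rewrite mxE.
    have [hs _] := Qpow_e0_triangular (ltn_ord j).
    by rewrite hs ?mulr0 //; have := ltn_ord j; lia.
  by rewrite -(mulEmx_low vlow) -mulSG -mulmxA Gv mulmx0.
by rewrite -ck (Qpow_e0_free (leqnn n) v0).
Qed.

Theorem kirillov_ker_dim : exists V : {vspace 'M[F]_N},
  (forall X, X \in V <-> in_kirillov_ker (@Fn F n) X) /\ \dim V = n.
Proof.
exists <<odd_powers>>%VS; split.
  by move=> X; rewrite kirillov_kerE; exact: span_odd_powersE.
by move: odd_powers_free; rewrite /free size_tuple => /eqP.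
Qed.

End Staircase.

Theorem theorem4p17 (R : realType) (n : nat) (hn : (1 <= n)%N) :
  exists V : {vspace 'M[R[i]]_(n.*2.+1)},
    (forall X : 'M[R[i]]_(n.*2.+1),
        X \in V <-> @in_kirillov_ker R[i] n (@Fn R[i] n) X)
    /\ \dim V = n.
Proof. by apply: kirillov_ker_dim => //; rewrite pnatr_eq0. Qed.
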